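(* Let $M$ be a unipotent square complex matrix and $k$ a positive integer. Then $F(M)=F(M^k)$, where for a matrix $X$, $F(X)$ denotes the field obtained by adjoining all entries of $X$ to $\mathbb{Q}$.
   Context: A matrix $M$ is unipotent if $M=I+T$ with $T$ nilpotent. *)

From HB Require Import structures.
From mathcomp Require Import all_boot all_order all_algebra.
From mathcomp Require Import complex.
From mathcomp Require Import reals.
Set Implicit Arguments. Unset Strict Implicit. Unset Printing Implicit Defensive.
Import Order.TTheory GRing.Theory Num.Theory.
Local Open Scope ring_scope.

Definition mx_nilpotent (F : pzRingType) (n : nat) (T : 'M[F]_n) : Prop :=
  exists m : nat, T ^+ m = 0.

Definition mx_unipotent (F : pzRingType) (n : nat) (M : 'M[F]_n) : Prop :=
  exists T : 'M[F]_n, mx_nilpotent T /\ M = 1%:M + T.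

Definition is_subfield (F : fieldType) (S : F -> Prop) : Prop :=
  [/\ S 0, S 1,
      (forall x y, S x -> S y -> S (x + y)),
      (forall x, S x -> S (- x)) &
      (forall x y, S x -> S y -> S (x * y))] /\
  (forall x, S x -> S x^-1).

(* F(X): the field obtained by adjoining all entries of X to Q, i.e. the
   smallest subfield of F containing every entry of X (in characteristic 0
   every subfield contains Q). *)
Definition entry_field (F : fieldType) (m n : nat) (X : 'M[F]_(m, n)) : F -> Prop :=
  fun z => forall S : F -> Prop, is_subfield S -> (forall i j, S (X i j)) -> S z.

(** Write the unipotent matrix as [M = 1 + T] with [T ^+ m = 0] and put
    [p := ('X + 1) ^+ k - 1], so that [M ^+ k - 1 = p(T)].  Since [p(0) = 0]
    and [p'(0) = k != 0], formal inversion gives [q] with rational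
    coefficients (which lie in every subfield) such that [q(p(X)) = X]
    modulo [X ^ m]; evaluating at [T] yields [T = q(M ^+ k - 1)].  Hence every subfield containing the entries
    of [M ^+ k] contains those of [M], and the converse is clear. *)
From HB Require Import structures.
From mathcomp Require Import all_boot all_order all_algebra.
From mathcomp Require Import complex.
From mathcomp Require Import reals.
From mathcomp Require Import ring.

Set Implicit Arguments.
Unset Strict Implicit.
Unset Printing Implicit Defensive.
Import Order.TTheory GRing.Theory Num.Theory.
Local Open Scope ring_scope.
Local Open Scope complex_scope.

Section FormalInverse.

Variable K : fieldType.
Implicit Types p q u h : {poly K}.

Lemma root0_factorX p : root p 0 -> exists2 u, p = u * 'X & u.[0] = p^`().[0].
Proof.
case/factor_theorem=> u; rewrite subr0 => ->.
by exists u => //; rewrite derivM derivX mulr1 !hornerE.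
Qed.

Lemma comp_left_inverse_modXn p :
  root p 0 -> p^`().[0] != 0 -> forall d, exists q h, 'X = q \Po p + h * 'X^d.
Proof.
case/root0_factorX=> u -> <- u0_neq0.
elim=> [|d [q [h IHd]]].
  by exists 0, 'X; rewrite comp_poly0 expr0 mulr1 add0r.
pose a := h.[0] / u.[0] ^+ d.
have : root (h - a%:P * u ^+ d) 0.
  by rewrite /root !hornerE /a divfK ?subrr // expf_neq0.
case/factor_theorem=> h'; rewrite subr0 => /(canRL (subrK _)) def_h.
exists (q + a *: 'X^d), h'.
rewrite comp_polyD comp_polyZ comp_Xn_poly -mul_polyC {1}IHd def_h.
rewrite exprMn exprSr; ring.
Qed.

End FormalInverse.

Lemma Xadd1_exp_sub1_left_inverse_modXn (k d : nat) : (0 < k)%N ->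
  exists q h : {poly rat}, 'X = q \Po (('X + 1) ^+ k - 1) + h * 'X^d.
Proof.
move=> k_gt0; apply: comp_left_inverse_modXn.
  by rewrite /root !hornerE expr1n subrr.
rewrite derivB derivC subr0 deriv_exp derivD derivX derivC addr0 mul1r.
by rewrite hornerMn !hornerE expr1n pnatr_eq0 -lt0n.
Qed.

Section SubfieldClosure.

Context {F : fieldType} {S : F -> Prop} (S_subfield : is_subfield S).

Lemma subfield0 : S 0. Proof. by case: S_subfield => -[]. Qed.
Lemma subfield1 : S 1. Proof. by case: S_subfield => -[]. Qed.

Lemma subfieldD x y : S x -> S y -> S (x + y).
Proof. by case: S_subfield => -[_ _ SD _ _] _; apply: SD. Qed.

Lemma subfieldN x : S x -> S (- x).
Proof. by case: S_subfield => -[_ _ _ SN _] _; apply: SN. Qed.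

Lemma subfieldM x y : S x -> S y -> S (x * y).
Proof. by case: S_subfield => -[_ _ _ _ SM] _; apply: SM. Qed.

Lemma subfieldV x : S x -> S x^-1.
Proof. by case: S_subfield => _ SV; apply: SV. Qed.

Lemma subfield_sum (I : Type) (r : seq I) (P : pred I) (f : I -> F) :
  (forall i, P i -> S (f i)) -> S (\sum_(i <- r | P i) f i).
Proof.
by move=> Sf; apply: big_ind => //; [exact: subfield0 | exact: subfieldD].
Qed.

Lemma subfield_nat n : S n%:R.
Proof.
elim: n => [|n IHn]; first exact: subfield0.
by rewrite mulrS; apply: subfieldD => //; apply: subfield1.
Qed.

Lemma subfield_int z : S z%:~R.
Proof.
case: z => n; rewrite ?NegzE ?mulrNz -?pmulrn; last apply: subfieldN;
  exact: subfield_nat.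
Qed.

Lemma subfield_rat a : S (ratr a).
Proof. by apply: subfieldM; [|apply: subfieldV]; apply: subfield_int. Qed.

Definition entries_in {m n} (A : 'M[F]_(m, n)) := forall i j, S (A i j).

Lemma entries_in_scalar n a : S a -> entries_in (a%:M : 'M_n).
Proof.
move=> Sa i j; rewrite mxE.
by case: eqP => _; [rewrite mulr1n | exact: subfield0].
Qed.

Lemma entries_inD m n (A B : 'M[F]_(m, n)) :
  entries_in A -> entries_in B -> entries_in (A + B).
Proof. by move=> SA SB i j; rewrite mxE; apply: subfieldD. Qed.

Lemma entries_inN m n (A : 'M[F]_(m, n)) : entries_in A -> entries_in (- A).
Proof. by move=> SA i j; rewrite mxE; apply: subfieldN. Qed.

Lemma entries_inM m n p (A : 'M[F]_(m, n)) (B : 'M[F]_(n, p)) :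
  entries_in A -> entries_in B -> entries_in (A *m B).
Proof.
by move=> SA SB i j; rewrite mxE; apply: subfield_sum => l _; apply: subfieldM.
Qed.

Lemma entries_inX n (A : 'M[F]_n) e : entries_in A -> entries_in (A ^+ e).
Proof.
move=> SA; elim: e => [|e IHe]; first exact/entries_in_scalar/subfield1.
by rewrite exprS; apply: entries_inM.
Qed.

End SubfieldClosure.

Arguments entries_in {F} S {m n} A.

Lemma horner_mx_comp (R : comNzRingType) n (A : 'M[R]_n.+1) (p q : {poly R}) :
  horner_mx A (q \Po p) = horner_mx (horner_mx A p) q.
Proof.
elim/poly_ind: q => [|q c IHq]; first by rewrite comp_poly0 !rmorph0.
by rewrite comp_poly_MXaddC !rmorphD !rmorphM /= IHq !horner_mx_X !horner_mx_C.
Qed.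

(* The cast makes [map_poly ratr] elaborate at [F] itself, where it is
   canonically a ring morphism. *)
Lemma entries_in_horner_rat (F : numFieldType) (S : F -> Prop) n
    (A : 'M[F]_n.+1) (q : {poly rat}) :
  is_subfield S -> entries_in S A ->
  entries_in S (horner_mx A (map_poly (ratr : rat -> F) q)).
Proof.
move=> S_subfield SA; elim/poly_ind: q => [|q c IHq].
  by rewrite !rmorph0 => i j; rewrite mxE; apply: subfield0.
rewrite !rmorphD !rmorphM /= map_polyX map_polyC.
rewrite horner_mx_X horner_mx_C; apply: entries_inD => //.
  exact: entries_inM.
exact/(entries_in_scalar S_subfield)/subfield_rat.
Qed.

Lemma nilpotent_eq_horner_unipotent_power (F : numFieldType) n
    (T : 'M[F]_n.+1) k :
  mx_nilpotent T -> (0 < k)%N ->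
  exists q : {poly rat},
    T = horner_mx ((1 + T) ^+ k - 1) (map_poly (ratr : rat -> F) q).
Proof.
case=> m Tm k_gt0.
have [q [h def_X]] := Xadd1_exp_sub1_left_inverse_modXn m k_gt0.
have horner_p : horner_mx T (map_poly (ratr : rat -> F) (('X + 1) ^+ k - 1))
                = (1 + T) ^+ k - 1.
  rewrite !rmorphB !rmorphXn !rmorphD /= map_polyX !rmorph1 /= horner_mx_X.
  by rewrite [T + 1]addrC.
exists q.
have := congr1 (fun p => horner_mx T (map_poly (ratr : rat -> F) p)) def_X.
rewrite map_polyX horner_mx_X !rmorphD !rmorphM /= map_polyXn rmorphXn /=.
rewrite horner_mx_X Tm mulr0 addr0.
rewrite (map_comp_poly (ratr : {rmorphism rat -> F})).
by rewrite horner_mx_comp horner_p.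
Qed.

Lemma entries_in_unipotent_of_power (F : numFieldType) (S : F -> Prop) n
    (M : 'M[F]_n) k :
  is_subfield S -> mx_unipotent M -> (0 < k)%N ->
  entries_in S (M ^+ k) -> entries_in S M.
Proof.
case: n M => [|n] M S_subfield; first by move=> _ _ _ [] [].
case=> T [T_nil ->] k_gt0 S_Mk.
have [q def_T] := nilpotent_eq_horner_unipotent_power T_nil k_gt0.
rewrite def_T; apply: entries_inD => //.
  by apply: (entries_in_scalar S_subfield); apply: subfield1.
apply: entries_in_horner_rat => //; apply: entries_inD => //.
by apply/(entries_inN S_subfield)/(entries_in_scalar S_subfield)/subfield1.
Qed.

Lemma entry_field_eq (F : fieldType) m1 n1 m2 n2 (X : 'M[F]_(m1, n1))
    (Y : 'M[F]_(m2, n2)) :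
  (forall S, is_subfield S -> entries_in S X <-> entries_in S Y) ->
  forall z, entry_field X z <-> entry_field Y z.
Proof.
by move=> sameS z; split=> Xz S S_subfield SXY; apply: Xz => //; apply/sameS.
Qed.

Theorem lemma7p6 (R : realType) (n : nat) (M : 'M[R[i]]_n) (k : nat) :
  mx_unipotent M -> (0 < k)%N ->
  forall z : R[i], entry_field M z <-> entry_field (M ^+ k) z.
Proof.
move=> M_unipotent k_gt0; apply: entry_field_eq => S S_subfield; split.
  exact: entries_inX.
exact: entries_in_unipotent_of_power.
Qed.
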